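(* Let $(\Xi,Z)$ be a random marked closed set. Its distribution (as a probability measure on $\Phi_{usc}$) is completely determined by the joint probabilities \[\mathbb{P}\big(\sup_{x\in B_i\cap\Xi}Z(x)<t_i,\ B_i\cap\Xi\neq\varnothing,\ i\in I;\ B_j\cap\Xi=\varnothing,\ j\in\{1,\ldots,n\}\setminus I\big),\] where $n\in\mathbb{N}$, $B_1,\ldots,B_n$ are compact subsets of $\mathbb{R}^d$, $t_1,\ldots,t_n\in\overline{\mathbb{R}}$, and $I\subseteq\{1,\ldots,n\}$.
   Context: $\overline{\mathbb{R}}=[-\infty,\infty]$. $\Phi_{usc}=\{(X,f):\,X\subseteq\mathbb{R}^d\text{ closed},\ f:X\rightarrow\overline{\mathbb{R}}\text{ upper semi-continuous}\}$, identified via $\tau(X,f)=\{(x,t)\in X\times\overline{\mathbb{R}}:\,t\leq f(x)\}$ with a family of closed subsets of $\mathbb{R}^d\times\overline{\mathbb{R}}$ (with the Fell topology and its Borel $\sigma$-field). Given a complete probability space $(\Omega,\mathcal{A},\mathbb{P})$, a random marked closed set is a map $(\Xi,Z):\Omega\rightarrow\Phi_{usc}$ such that $\{\omega:\,\tau(\Xi,Z)\cap B\neq\varnothing\}\in\mathcal{A}$ for every compact $B\subseteq\mathbb{R}^d\times\overline{\mathbb{R}}$. *)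

From HB Require Import structures.
From mathcomp Require Import all_boot all_order all_algebra.
From mathcomp Require Import all_classical all_reals all_analysis.
Set Implicit Arguments. Unset Strict Implicit. Unset Printing Implicit Defensive.
Import Order.TTheory GRing.Theory Num.Theory.
Import numFieldNormedType.Exports.
Local Open Scope classical_set_scope.
Local Open Scope ring_scope.

Section Defs.
Variables (R : realType) (d : nat).

Local Notation V := 'rV[R]_d.
Local Notation E := (V * \bar R)%type.

(* f : X -> \bar R is upper semi-continuous on X (values outside X are
   irrelevant). *)
Definition usc_on (X : set V) (f : V -> \bar R) : Prop :=
  forall x, X x -> forall t : \bar R, (f x < t)%E ->
    \forall y \near x, X y -> (f y < t)%E.

Definition tau (X : set V) (f : V -> \bar R) : set E :=
  [set p | X p.1 /\ (p.2 <= f p.1)%E].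

Definition closedE : set (set E) := [set F | closed F].

Definition fell_subbase : set (set (set E)) :=
  [set U | (exists K : set E, compact K /\ U = [set F | closed F /\ F `&` K = set0])
        \/ (exists G : set E, open G /\ U = [set F | closed F /\ F `&` G !=set0])].

Definition is_topology_on (S : set (set E)) (O : set (set (set E))) : Prop :=
  O S /\ (forall A B, O A -> O B -> O (A `&` B)) /\
  (forall (I : Type) (A : I -> set (set E)), (forall i, O (A i)) ->
      O (\bigcup_i A i)).

Definition fell_open : set (set (set E)) :=
  smallest (is_topology_on closedE) fell_subbase.

Definition fell_borel : set (set (set E)) := <<s closedE, fell_open >>.

Definition random_marked_closed_set dT (T : measurableType dT)
    (Xi : T -> set V) (Z : T -> V -> \bar R) : Prop :=
  (forall w, closed (Xi w) /\ usc_on (Xi w) (Z w)) /\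
  (forall B : set E, compact B ->
     measurable [set w | tau (Xi w) (Z w) `&` B !=set0]).

Definition joint_event dT (T : measurableType dT)
    (Xi : T -> set V) (Z : T -> V -> \bar R)
    (n : nat) (B : 'I_n -> set V) (t : 'I_n -> \bar R) (I : {set 'I_n}) : set T :=
  [set w | forall i : 'I_n,
     (i \in I -> (ereal_sup (Z w @` (B i `&` Xi w)) < t i)%E /\ B i `&` Xi w !=set0)
     /\ (i \notin I -> B i `&` Xi w = set0)].

Definition distribution_rmcs dT (T : measurableType dT) (P : probability T R)
    (Xi : T -> set V) (Z : T -> V -> \bar R) (A : set (set E)) : \bar R :=
  P [set w | A (tau (Xi w) (Z w))].

End Defs.

From Pilot Require Import Defs.
From HB Require Import structures.
From mathcomp Require Import all_boot all_order all_algebra.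
From mathcomp Require Import all_classical all_reals all_analysis.
From mathcomp Require Import lra.
Import Order.TTheory GRing.Theory Num.Theory.
Import numFieldNormedType.Exports.
Local Open Scope classical_set_scope.
Local Open Scope ring_scope.
Set Implicit Arguments. Unset Strict Implicit. Unset Printing Implicit Defensive.

(* On the hypograph of an upper semicontinuous mark, missing a box
   [B `*` `[t, +oo]] with [B] compact means that either [B] misses the ground
   set or the supremum of the mark over it is [< t].  So the probability of
   missing finitely many such boxes is a sum of the given joint probabilities,
   and the two laws agree on the sigma-algebra generated by these avoidance
   events (pi-lambda theorem).  Every Fell-Borel set agrees with a set of
   this sigma-algebra on hypographs: locally around a hypograph, a Fell-open
   set contains a set described by finitely many conditions "misses / meets
   the box over a closed rational cube above a rational level".  For the
   "misses a compact K" condition, such missed boxes cover [K] by upper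
   semicontinuity; for the "meets an open G" condition, one box suffices
   because hypographs are closed downwards in the mark.  There are countably
   many such descriptions. *)

(* [compact_cover] is stated for pointed topological spaces, and the product
   of two of them is not declared to be one by the library. *)
HB.instance Definition _ (U W : ptopologicalType) := Topological.on (U * W)%type.

Section preimage_agree.
Variables (R : realType) (E : Type).
Variables (d1 : measure_display) (T1 : measurableType d1).
Variables (d2 : measure_display) (T2 : measurableType d2).
Variables (P1 : probability T1 R) (P2 : probability T2 R).
Variables (g1 : T1 -> E) (g2 : T2 -> E).

Definition preimage_agree : set (set E) := [set A | [/\ measurable (g1 @^-1` A),
  measurable (g2 @^-1` A) & P1 (g1 @^-1` A) = P2 (g2 @^-1` A)]].

Lemma dynkin_preimage_agree : dynkin preimage_agree.
Proof.
split.
- by split; rewrite ?preimage_setT ?probability_setT //; exact: measurableT.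
- move=> A [m1 m2 e].
  rewrite /preimage_agree /= -(preimage_setC g1) -(preimage_setC g2).
  split; [exact: measurableC | exact: measurableC |].
  by rewrite (probability_setC _ m1) (probability_setC _ m2) e.
- move=> F tF agF; rewrite /preimage_agree /= !preimage_bigcup.
  have m1 n : measurable (g1 @^-1` F n) by case: (agF n).
  have m2 n : measurable (g2 @^-1` F n) by case: (agF n).
  have t1 : trivIset setT (fun n => g1 @^-1` F n).
    by move=> i j _ _ [x [? ?]]; apply: (tF i j I I); exists (g1 x).
  have t2 : trivIset setT (fun n => g2 @^-1` F n).
    by move=> i j _ _ [x [? ?]]; apply: (tF i j I I); exists (g2 x).
  split; [exact: bigcupT_measurable | exact: bigcupT_measurable |].
  rewrite (measure_bigcup P1 _ _ (fun n _ => m1 n) t1).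
  rewrite (measure_bigcup P2 _ _ (fun n _ => m2 n) t2).
  by apply: eq_eseriesr => n _; case: (agF n).
Qed.

Lemma sigma_preimage_agree (G : set (set E)) : setI_closed G ->
  G `<=` preimage_agree -> <<s G >> `<=` preimage_agree.
Proof.
move=> GI Gagree; apply: lambda_system_subset => //.
exact/dynkin_lambda_system/dynkin_preimage_agree.
Qed.

End preimage_agree.

Section ereal_order.
Variable R : realType.

Lemma ereal_ratr_between (a b : \bar R) : (a < b)%E ->
  exists q : rat, (a < (ratr q)%:E < b)%E.
Proof.
have between (c c' : R) : (a <= c%:E)%E -> (c'%:E <= b)%E -> c < c' ->
    exists q : rat, (a < (ratr q)%:E < b)%E.
  move=> ac cb /rat_in_itvoo[q]; rewrite in_itv /= => /andP[cq qc'].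
  by exists q; rewrite (le_lt_trans ac) ?lte_fin // (lt_le_trans _ cb) ?lte_fin.
move: between; case: a => [r||]; case: b => [r'||] //= between.
- by rewrite lte_fin => rr'; apply: (between r r').
- by move=> _; apply: (between r (r + 1)); rewrite ?leey // ltrDl.
- by move=> _; apply: (between (r' - 1) r'); rewrite ?leNye // gtrDl ltrN10.
- by move=> _; apply: (between 0 1); rewrite ?leNye ?leey.
Qed.

Lemma seq_ubound_lt (s : seq (\bar R)) (t : \bar R) : (-oo < t)%E ->
  (forall u, u \in s -> (u < t)%E) ->
  exists2 m, (m < t)%E & forall u, u \in s -> (u <= m)%E.
Proof.
move=> tNy; elim: s => [|a s IH] slt; first by exists -oo%E.
have [|m mt sm] := IH.
  by move=> u us; apply: slt; rewrite in_cons us orbT.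
exists (Order.max a m); first by rewrite gt_max mt slt ?mem_head.
move=> u; rewrite in_cons => /orP[/eqP->|us]; first by rewrite le_max lexx.
by rewrite le_max sm // orbT.
Qed.

End ereal_order.

Section hypograph.
Variables (R : realType) (d : nat).
Local Notation V := 'rV[R]_d.
Local Notation E := (V * \bar R)%type.

Lemma closed_tau (X : set V) (f : V -> \bar R) :
  closed X -> usc_on X f -> closed (tau X f).
Proof.
move=> clX uf; rewrite -openC openE => -[x s] /= ntau.
have [Xx|nXx] := pselect (X x); last first.
  have := closed_openC clX; rewrite openE => /(_ x nXx) nX.
  exists (~` X, setT) => //=; first by split => //; exact: filterT.
  by move=> [y u] /= [nXy _] [].
have fs : (f x < s)%E by rewrite ltNge; apply/negP => fxs; apply: ntau.
have [q /andP[fq qs]] := ereal_ratr_between fs.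
exists ([set y | X y -> (f y < (ratr q)%:E)%E], [set u | ((ratr q)%:E < u)%E]).
  split; first exact: uf.
  by have := @open_ereal_gt_ereal R (ratr q)%:E; rewrite openE; apply.
move=> [y u] /= [fyq qu] [Xy uf'].
by have := lt_le_trans qu uf'; rewrite ltNge (ltW (fyq Xy)).
Qed.

(* The finitely many open sets [{f < q}] covering the compact set [B `&` X]
   give a uniform level [m < t]. *)
Lemma ereal_sup_usc_lt (B X : set V) (f : V -> \bar R) (t : \bar R) :
  compact B -> closed X -> usc_on X f -> B `&` X !=set0 ->
  (forall x, B x -> X x -> (f x < t)%E) ->
  (ereal_sup (f @` (B `&` X)) < t)%E.
Proof.
move=> cB clX uf [x0 [Bx0 Xx0]] flt.
have tNy : (-oo < t)%E by apply: le_lt_trans (flt x0 Bx0 Xx0); rewrite leNye.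
have := compact_closedI cB clX; rewrite compact_cover => BXcover.
pose O (u : \bar R) := [set y | X y -> (f y < u)%E]°.
have cov : B `&` X `<=` cover [set u | (u < t)%E] O.
  move=> x [Bx Xx]; have [q /andP[fq qt]] := ereal_ratr_between (flt x Bx Xx).
  by exists (ratr q)%:E => //; exact: uf.
have [D sD covD] := BXcover _ _ O (fun u _ => @open_interior _ _) cov.
have [m mt Dm] : exists2 m, (m < t)%E &
    forall u, u \in finmap.enum_fset D -> (u <= m)%E.
  by apply: seq_ubound_lt => // u /sD; rewrite inE.
apply: le_lt_trans mt; apply: ge_ereal_sup => _ [x [Bx Xx] <-].
have [u uD Ou] := covD x (conj Bx Xx).
exact: le_trans (ltW (interior_subset Ou Xx)) (Dm u uD).
Qed.

Definition box (B : set V) (t : \bar R) : set E := B `*` [set s | (t <= s)%E].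

Lemma tau_box_set1 (X : set V) f B t :
  (tau X f `&` box B t = set0) <-> (tau X f `&` (B `*` [set t]) = set0).
Proof.
rewrite -!subset0; split => tBt [x s].
  move=> [[Xx fx] [Bx /= st]]; apply: (tBt (x, s)).
  by split; split => //=; rewrite st.
move=> [[Xx fx] [Bx /= ts]]; apply: (tBt (x, t)).
by split; split => //=; exact: le_trans fx.
Qed.

Lemma tau_boxNy (X : set V) f B :
  (tau X f `&` box B -oo = set0) <-> (B `&` X = set0).
Proof.
rewrite -!subset0; split => tB.
  by move=> x [Bx Xx]; apply: (tB (x, f x)); split; split => //=; exact: leNye.
by move=> [x s] [[Xx _] [Bx _]]; apply: (tB x).
Qed.

Lemma tau_boxP (X : set V) (f : V -> \bar R) (B : set V) (t : \bar R) :
  closed X -> usc_on X f -> compact B ->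
  (tau X f `&` box B t = set0) <->
  (B `&` X = set0 \/ (B `&` X !=set0 /\ (ereal_sup (f @` (B `&` X)) < t)%E)).
Proof.
move=> clX uf cB; split => [tB|].
  have [BX|/nonemptyPn] := pselect (B `&` X !=set0); last by left.
  right; split => //; apply: ereal_sup_usc_lt => // x Bx Xx.
  rewrite ltNge; apply/negP => tfx.
  by have := tB; rewrite -subset0 => /(_ (x, t)); apply; split; split => //=.
move=> BXsup; rewrite -subset0 => -[x s] [[Xx fxs] [Bx /= ts]].
case: BXsup => [BX|[_ suplt]]; first by rewrite -subset0 in BX; exact: (BX x).
have fxsup : (f x <= ereal_sup (f @` (B `&` X)))%E.
  by apply: ereal_sup_ubound; exists x.
by have := le_lt_trans (le_trans (le_trans ts fxs) fxsup) suplt; rewrite ltxx.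
Qed.

End hypograph.

Section joint_event.
Variables (R : realType) (d : nat).
Local Notation V := 'rV[R]_d.
Variables (dT : measure_display) (T : measurableType dT).
Variables (Xi : T -> set V) (Z : T -> V -> \bar R).
Hypothesis rmcs : random_marked_closed_set Xi Z.

Let avoid B t := [set w | tau (Xi w) (Z w) `&` box B t = set0].

Lemma measurable_avoid_box B t : compact B -> measurable (avoid B t).
Proof.
move=> cB; rewrite (_ : avoid B t =
    ~` [set w | tau (Xi w) (Z w) `&` (B `*` [set t]) !=set0]).
  exact/measurableC/rmcs.2/compact_setX/compact_set1.
apply/seteqP; split => w /=.
  by move/tau_box_set1/nonemptyPn.
by move/nonemptyPn/tau_box_set1.
Qed.

Let joint_eventE n (B : 'I_n -> set V) t I : (forall i, compact (B i)) ->
  joint_event Xi Z B t I = \bigcap_(i in [set: 'I_n])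
    if i \in I then ~` avoid (B i) -oo `&` avoid (B i) (t i)
    else avoid (B i) -oo.
Proof.
move=> cB; apply/seteqP; split => w /= jw i; have [clX uX] := rmcs.1 w.
- move=> _; have [jwI jwNI] := jw i.
  case: ifPn => [iI|/jwNI BX]; last exact/tau_boxNy.
  have [lt BX] := jwI iI; split; first by move/tau_boxNy/nonemptyPn.
  by apply/(tau_boxP _ clX uX (cB i)); right.
- move: (jw i Logic.I); case: ifPn => [iI [BX]|_ /tau_boxNy //].
  have {}BX : B i `&` Xi w !=set0.
    by apply: contra_notP BX => /nonemptyPn BX; apply/tau_boxNy.
  by move/(tau_boxP _ clX uX (cB i)) => [/nonemptyPn //|[_ lt]].
Qed.

Lemma measurable_joint_event n (B : 'I_n -> set V) t I :
  (forall i, compact (B i)) -> measurable (joint_event Xi Z B t I).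
Proof.
move=> cB; rewrite joint_eventE //.
apply: fin_bigcap_measurable => [|i _]; first exact: finite_finset.
case: ifPn => _; last exact: measurable_avoid_box.
by apply: measurableI; [apply: measurableC|]; exact: measurable_avoid_box.
Qed.

Lemma avoid_boxesE n (B : 'I_n -> set V) t : (forall i, compact (B i)) ->
  (fun w => tau (Xi w) (Z w)) @^-1`
    [set F | forall i, F `&` box (B i) (t i) = set0] =
  \bigcup_(I in [set: {set 'I_n}]) joint_event Xi Z B t I.
Proof.
move=> cB; apply/seteqP; split => w /= avw.
- exists (finset (fun i => `[< B i `&` Xi w !=set0 >])) => // i; rewrite inE.
  have [clX uX] := rmcs.1 w; split => [/asboolP BX|/asboolP/nonemptyPn //].
  by have /(tau_boxP _ clX uX (cB i)) [/nonemptyPn //|[]] := avw i.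
- have [I _ jw] := avw; move=> i; have [clX uX] := rmcs.1 w.
  apply/(tau_boxP _ clX uX (cB i)); have [jwI jwNI] := jw i.
  by case: (boolP (i \in I)) => [/jwI []|/jwNI]; [right | left].
Qed.

Lemma trivIset_joint_event n (B : 'I_n -> set V) t :
  trivIset setT (joint_event Xi Z B t).
Proof.
move=> I J _ _ [w [jwI jwJ]]; apply/setP => i.
have [I1 I2] := jwI i; have [J1 J2] := jwJ i.
case: (boolP (i \in I)) => iI; case: (boolP (i \in J)) => iJ //.
- by have [_] := I1 iI; move/nonemptyPn: (J2 iJ).
- by have [_] := J1 iJ; move/nonemptyPn: (I2 iI).
Qed.

End joint_event.

Section avoid_boxes.
Variables (R : realType) (d : nat).
Local Notation V := 'rV[R]_d.
Local Notation E := (V * \bar R)%type.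

Definition avoid_boxes : set (set (set E)) :=
  [set A | exists n (B : 'I_n -> set V) (t : 'I_n -> \bar R),
  (forall i, compact (B i)) /\
  A = [set F | forall i, F `&` box (B i) (t i) = set0]].

Lemma avoid_boxes_setI : setI_closed avoid_boxes.
Proof.
move=> _ _ [n1 [B1 [t1 [cB1 ->]]]] [n2 [B2 [t2 [cB2 ->]]]].
pose glue T (f1 : 'I_n1 -> T) (f2 : 'I_n2 -> T) i :=
  match fintype.split i with inl j => f1 j | inr j => f2 j end.
exists (n1 + n2)%N, (glue _ B1 B2), (glue _ t1 t2); split.
  by move=> i; rewrite /glue; case: (fintype.split i).
apply/seteqP; split => F /=.
  by move=> [F1 F2] i; rewrite /glue; case: (fintype.split i).
move=> F12; split => j.
  by have := F12 (unsplit (inl j)); rewrite /glue unsplitK.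
by have := F12 (unsplit (inr j)); rewrite /glue unsplitK.
Qed.

Variables (d1 : measure_display) (T1 : measurableType d1).
Variables (d2 : measure_display) (T2 : measurableType d2).
Variables (P1 : probability T1 R) (P2 : probability T2 R).
Variables (Xi1 : T1 -> set V) (Z1 : T1 -> V -> \bar R).
Variables (Xi2 : T2 -> set V) (Z2 : T2 -> V -> \bar R).
Hypothesis rmcs1 : random_marked_closed_set Xi1 Z1.
Hypothesis rmcs2 : random_marked_closed_set Xi2 Z2.
Hypothesis joint_eq : forall n (B : 'I_n -> set V) (t : 'I_n -> \bar R) I,
  (forall i, compact (B i)) ->
  P1 (joint_event Xi1 Z1 B t I) = P2 (joint_event Xi2 Z2 B t I).

(* Avoiding every box [B i `*` `[t i, +oo]] is the disjoint union, over the
   set [I] of the [B i] meeting [Xi], of the joint events. *)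
Lemma avoid_boxes_preimage_agree : avoid_boxes `<=`
  preimage_agree P1 P2 (fun w => tau (Xi1 w) (Z1 w))
    (fun w => tau (Xi2 w) (Z2 w)).
Proof.
move=> _ [n [B [t [cB ->]]]]; rewrite /preimage_agree /= !avoid_boxesE //.
have mJ dT (T : measurableType dT) (Xi : T -> set V) Z :
    random_marked_closed_set Xi Z ->
    forall I, [set: {set 'I_n}] I -> measurable (joint_event Xi Z B t I).
  by move=> rmcs I _; exact: measurable_joint_event.
split; [exact: fin_bigcup_measurable finite_finset (mJ _ _ _ _ rmcs1) |
        exact: fin_bigcup_measurable finite_finset (mJ _ _ _ _ rmcs2) |].
rewrite (measure_fin_bigcup _ finite_finset
  (trivIset_joint_event (Xi := Xi1) (Z := Z1) (B := B) (t := t))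
  (mJ _ _ _ _ rmcs1)).
rewrite (measure_fin_bigcup _ finite_finset
  (trivIset_joint_event (Xi := Xi2) (Z := Z2) (B := B) (t := t))
  (mJ _ _ _ _ rmcs2)).
by apply: eq_fsbigr => I _; exact: joint_eq.
Qed.

End avoid_boxes.

Lemma open_setX (U W : topologicalType) (A : set U) (B : set W) :
  open A -> open B -> open (A `*` B).
Proof.
rewrite !openE => oA oB [x s] [Ax Bs].
by exists (A, B) => //; split; [exact: oA | exact: oB].
Qed.

Section nbhs_ereal.
Variable R : realType.

Lemma nbhs_ereal_left (s : \bar R) (B : set (\bar R)) : (-oo < s)%E ->
  nbhs s B -> exists2 a : R, (a%:E < s)%E &
    forall v, (a%:E < v)%E -> (v <= s)%E -> B v.
Proof.
case: s => [r| |] // _.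
- move=> rB; have /nbhs_ballP[e e0 eB] : nbhs r (fun x => B x%:E) := rB.
  exists (r - e); first by rewrite lte_fin gtrDl oppr_lt0.
  case=> [v| |] //= ev vr; apply: eB; rewrite -ball_normE /ball_ /= ltr_distlC.
  by rewrite -lte_fin ev /= (le_lt_trans (vr : v <= r)) // ltrDl.
- by move=> [M [Mr MB]]; exists M => [|v Mv _]; [rewrite ltry | exact: MB].
Qed.

Definition level (o : option rat) : \bar R :=
  if o is Some q then (ratr q)%:E else -oo%E.

Lemma nbhs_ereal_level_below (s : \bar R) (B : set (\bar R)) : nbhs s B ->
  exists o, (level o <= s)%E /\
    forall u, (level o <= u)%E -> exists2 u', B u' & (u' <= u)%E.
Proof.
case: (eqVneq s -oo%E) => [->|sNy] sB.
  exists None; split => [|u _]; first exact: lexx.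
  by exists -oo%E; [exact: nbhs_singleton | exact: leNye].
have s_gtNy : (-oo < s)%E by rewrite ltNye.
have [a as_ aB] := nbhs_ereal_left s_gtNy sB.
have [q /andP[aq qs]] := ereal_ratr_between as_.
exists (Some q); split => [|u qu]; first exact: ltW.
exists (Order.min u s); last by rewrite ge_min lexx.
apply: aB; last by rewrite ge_min lexx orbT.
by rewrite lt_min (lt_le_trans aq qu) (lt_trans aq qs).
Qed.

End nbhs_ereal.
Arguments level {R}.

Section cube_codes.
Context {R : realType} {d : nat}.
Local Notation V := 'rV[R]_d.
Local Notation E := (V * \bar R)%type.

Lemma compact_closed_ball (x : V) (r : R) : compact (closed_ball x r).
Proof.
have [r0|r0] := ltP 0 r; last by rewrite closed_ball0 //; exact: compact0.
apply: bounded_closed_compact; last exact: closed_ball_closed.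
exists (`|x| + r); split => [|M xrM y]; first exact: num_real.
rewrite closed_ballE // /closed_ball_ /= => xy.
have := ler_normD x (y - x); rewrite addrC subrK distrC => yxy; lra.
Qed.

Definition cube_code := ('rV[rat]_d * nat)%type.
Definition cube_center (c : cube_code) : V := map_mx ratr c.1.
Definition cube_radius (c : cube_code) : R := c.2.+1%:R^-1.

Lemma cube_radius_gt0 c : 0 < cube_radius c.
Proof. by rewrite invr_gt0 ltr0n. Qed.

Lemma cube_approx (x : V) (e : R) : 0 < e -> exists c : cube_code,
  ball (cube_center c) (cube_radius c) x /\
  closed_ball (cube_center c) (cube_radius c) `<=` ball x e.
Proof.
move=> e0; have e20 : 0 < e / 2 by rewrite divr_gt0.
have [n _ /(_ n (leqnn n)) ne] := near_infty_natSinv_lt (PosNum e20).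
set r : R := n.+1%:R^-1 in ne.
have /choice[q xq] : forall i, exists q : rat, `|x ord0 i - ratr q| < r.
  move=> i; have [|q] := @rat_in_itvoo _ (x ord0 i - r) (x ord0 i + r).
    by rewrite ltrD2l gtrN // invr_gt0 ltr0n.
  by rewrite in_itv /= -ltr_distlC => ?; exists q.
exists (\row_i q i, n).
have cx : ball (cube_center (\row_i q i, n)) r x.
  split=> [|i j]; first by rewrite invr_gt0 ltr0n.
  by rewrite (ord1 i) !mxE -ball_normE /ball_ /= distrC.
have r2e : r < e - r by rewrite /= in ne; lra.
split => // y /(closed_ball_subset (cube_radius_gt0 (\row_i q i, n)) r2e) cy.
by have := ball_triangle (ball_sym cx) cy; rewrite addrC subrK.
Qed.

Definition above_level (o : option rat) : set (\bar R) :=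
  if o is Some q then [set u | ((ratr q)%:E < u)%E] else setT.

Lemma open_above_level o : open (above_level o).
Proof. by case: o => [q|]; [exact: open_ereal_gt_ereal | exact: openT]. Qed.

Lemma above_levelW o u : above_level o u -> (level o <= u)%E.
Proof. by case: o => [q /ltW|_] //=; exact: leNye. Qed.

Definition cube_box (c : cube_code * option rat) : set E :=
  box (closed_ball (cube_center c.1) (cube_radius c.1)) (level c.2).

Definition cube_nbhs (c : cube_code * option rat) : set E :=
  ball (cube_center c.1) (cube_radius c.1) `*` above_level c.2.

Lemma open_cube_nbhs c : open (cube_nbhs c).
Proof. exact/open_setX/open_above_level/ball_open. Qed.

Lemma cube_nbhs_box c : cube_nbhs c `<=` cube_box c.
Proof.
move=> [x u] [cx cu].
by split; [exact: subset_closed_ball | exact: above_levelW].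
Qed.

Lemma tau_level_nbhs (X : set V) (f : V -> \bar R) x s :
  closed X -> usc_on X f -> ~ tau X f (x, s) -> exists o, above_level o s /\
  exists2 e, 0 < e & forall y, ball x e y -> X y -> (f y < level o)%E.
Proof.
move=> clX uf ntau; have [Xx|nXx] := pselect (X x); last first.
  have := closed_openC clX; rewrite openE => /(_ x nXx) /nbhs_ballP[e e0 eX].
  by exists None; split => //; exists e => // y /eX.
have fs : (f x < s)%E by rewrite ltNge; apply/negP => sfx; apply: ntau.
have [q /andP[fq qs]] := ereal_ratr_between fs.
have /nbhs_ballP[e e0 ef] := uf x Xx _ fq.
by exists (Some q); split => //; exists e.
Qed.

Lemma tau_avoid_cube (X : set V) (f : V -> \bar R) p :
  closed X -> usc_on X f -> ~ tau X f p ->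
  exists c, cube_nbhs c p /\ tau X f `&` cube_box c = set0.
Proof.
case: p => x s clX uf ntau.
have [l [sl [e e0 fl]]] := tau_level_nbhs clX uf ntau.
have [b [bx be]] := cube_approx x e0.
exists (b, l); split => //.
rewrite -subset0 => -[y u] [[Xy fyu] [/be xy /= lu]].
by have := lt_le_trans (fl y xy Xy) (le_trans lu fyu); rewrite ltxx.
Qed.

End cube_codes.

Section coded_sets.
Variables (R : realType) (d : nat).
Local Notation V := 'rV[R]_d.
Local Notation E := (V * \bar R)%type.

Definition hypograph (F : set E) : Prop :=
  exists X f, [/\ closed X, usc_on X f & F = tau X f].

Lemma hypograph_closed F : hypograph F -> closed F.
Proof. by move=> [X [f [clX uf ->]]]; exact: closed_tau. Qed.

Definition basic_code := (bool * (@cube_code d * option rat))%type.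

Definition basic_set (c : basic_code) : set (set E) :=
  if c.1 then [set F | F `&` cube_box c.2 = set0]
  else [set F | F `&` cube_box c.2 !=set0].

Definition basic_inter (s : seq basic_code) : set (set E) :=
  \bigcap_(c in [set` s]) basic_set c.

Definition hypo_coded (U : set (set E)) : Prop :=
  forall F, hypograph F -> U F ->
  exists2 s, basic_inter s F & forall G, hypograph G -> basic_inter s G -> U G.

Lemma hypo_coded_topology : is_topology_on (@Defs.closedE R d) hypo_coded.
Proof.
split; [|split].
- move=> F hF _; exists [::] => [c|G hG _] //; exact: hypograph_closed.
- move=> A B cA cB F hF [AF BF].
  have [s1 s1F s1A] := cA F hF AF; have [s2 s2F s2B] := cB F hF BF.
  exists (s1 ++ s2) => [c /=|G hG sG].
    by rewrite mem_cat => /orP[/s1F|/s2F].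
  split; [apply: s1A | apply: s2B] => // c cs.
    by apply: sG; rewrite /= mem_cat cs.
  by apply: sG; rewrite /= mem_cat cs orbT.
- move=> I A cA F hF [i _ AiF]; have [s sF sA] := cA i F hF AiF.
  by exists s => // G hG sG; exists i => //; exact: sA.
Qed.

Lemma hypo_coded_avoid K : compact K ->
  hypo_coded [set F | closed F /\ F `&` K = set0].
Proof.
move=> cK F hF [clF FK]; have [X [f [clX uf eF]]] := hF.
pose D := [set c | F `&` cube_box c = set0].
have KD : K `<=` cover D (@cube_nbhs R d).
  move=> p Kp; have nFp : ~ tau X f p.
    by rewrite -eF => Fp; rewrite -subset0 in FK; exact: (FK p).
  have [c [cp Fc]] := tau_avoid_cube clX uf nFp.
  by exists c => //; rewrite /D eF.
rewrite compact_cover in cK.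
have [D' D'D KD'] := cK _ D _ (fun c _ => open_cube_nbhs (c := c)) KD.
exists [seq (true, c) | c <- finmap.enum_fset D'].
  by move=> _ /mapP[c cD' ->]; have := D'D c cD'; rewrite inE.
move=> G hG GD'; split; first exact: hypograph_closed.
rewrite -subset0 => p [Gp Kp]; have [c cD' cp] := KD' p Kp.
have := GD' (true, c) (map_f _ cD'); rewrite /basic_set /= -subset0 => /(_ p).
by apply; split => //; exact: (cube_nbhs_box (c := c)) cp.
Qed.

Lemma hypo_coded_hit G : open G ->
  hypo_coded [set F | closed F /\ F `&` G !=set0].
Proof.
move=> oG F hF [clF [[x s] [Fxs Gxs]]].
have [[A B] /= [xA sB] ABG] : nbhs (x, s) G by move: oG; rewrite openE; apply.
have /nbhs_ballP[e e0 eA] := xA.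
have [b [bx be]] := cube_approx x e0.
have [l [ls lB]] := nbhs_ereal_level_below sB.
exists [:: (false, (b, l))] => [c|H hH Hbl].
  rewrite /= inE => /eqP -> /=; exists (x, s); split => //.
  by split => //=; exact: subset_closed_ball.
split; first exact: hypograph_closed.
have [[y u] [Hyu [by_ lu]]] := Hbl (false, (b, l)) (mem_head _ _).
have [Y [g [_ _ eH]]] := hH; have [u' Bu' u'u] := lB u lu.
exists (y, u'); split; last exact: (ABG (y, u') (conj (eA y (be y by_)) Bu')).
by move: Hyu; rewrite eH => -[Yy ug]; split => //=; exact: le_trans u'u ug.
Qed.

Lemma fell_open_hypo_coded : @fell_open R d `<=` hypo_coded.
Proof.
apply: smallest_sub; first exact: hypo_coded_topology.
move=> U [[K [cK ->]]|[G [oG ->]]].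
  exact: hypo_coded_avoid.
exact: hypo_coded_hit.
Qed.

End coded_sets.

Section hypo_measurable.
Variables (R : realType) (d : nat).
Local Notation V := 'rV[R]_d.
Local Notation E := (V * \bar R)%type.
Local Notation avoid_sigma := (g_sigma_algebraType (@avoid_boxes R d)).

Lemma measurable_basic_set (c : basic_code d) :
  measurable (basic_set c : set avoid_sigma).
Proof.
have avoid_c :
    measurable ([set F | F `&` cube_box c.2 = set0] : set avoid_sigma).
  apply: sub_sigma_algebra; exists 1%N, (fun=> closed_ball (cube_center c.2.1)
    (cube_radius c.2.1)), (fun=> level c.2.2); split => [_|].
    exact: compact_closed_ball.
  by apply/seteqP; split => F /= FB; [move=> _ | exact: FB ord0].
case: c avoid_c => -[] c // avoid_c; rewrite /basic_set /=.
rewrite (_ : [set F | _ !=set0] = ~` [set F | F `&` cube_box c = set0]).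
  exact: measurableC.
apply/seteqP; split => F /= => [Fc /nonemptyPn|nFc]; first exact.
by apply: contrapT => /nonemptyPn.
Qed.

Lemma measurable_basic_inter (s : seq (basic_code d)) :
  measurable (basic_inter s : set avoid_sigma).
Proof.
apply: fin_bigcap_measurable => [|c _]; first exact: finite_seq.
exact: measurable_basic_set.
Qed.

Definition hypo_measurable : set (set (set E)) :=
  [set U | exists2 A : set avoid_sigma, measurable A &
    forall F, hypograph F -> U F <-> A F].

Lemma hypo_coded_measurable U : hypo_coded U -> hypo_measurable U.
Proof.
move=> cU; pose S := [set s | forall G, hypograph G -> basic_inter s G -> U G].
exists (\bigcup_(s in S) basic_inter s).
  rewrite bigcup_mkcond; apply: countable_bigcupT_measurable => [|s].
    exact: countableP.
  by case: ifPn => _; [exact: measurable_basic_inter | exact: measurable0].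
move=> F hF; split => [UF|[s Ss sF]]; last exact: Ss.
by have [s sF Ss] := cU F hF UF; exists s.
Qed.

Lemma sigma_algebra_hypo_measurable :
  sigma_algebra (@Defs.closedE R d) hypo_measurable.
Proof.
split.
- by exists set0 => // F _; split.
- move=> U [A mA UA]; exists (~` A); first exact: measurableC.
  move=> F hF; split => [[_ nUF] AF|nAF]; first exact/nUF/(UA F hF).
  by split; [exact: hypograph_closed | move/(UA F hF)].
- move=> U hmU; have /choice[A hA] : forall n, exists A : set avoid_sigma,
      measurable A /\ forall F, hypograph F -> U n F <-> A F.
    by move=> n; have [A mA UA] := hmU n; exists A.
  exists (\bigcup_n A n); first by apply: bigcupT_measurable => n; case: (hA n).
  move=> F hF; split => -[n _ nF]; exists n => //; have [_ UA] := hA n.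
    exact/(UA F hF).
  exact/(UA F hF).
Qed.

Lemma fell_borel_hypo_measurable : @fell_borel R d `<=` hypo_measurable.
Proof.
apply: smallest_sub; first exact: sigma_algebra_hypo_measurable.
by move=> U /fell_open_hypo_coded/hypo_coded_measurable.
Qed.

End hypo_measurable.

Theorem theorem2p3 (R : realType) (d : nat)
  (d1 : measure_display) (T1 : measurableType d1) (P1 : probability T1 R)
  (d2 : measure_display) (T2 : measurableType d2) (P2 : probability T2 R)
  (Xi1 : T1 -> set 'rV[R]_d) (Z1 : T1 -> 'rV[R]_d -> \bar R)
  (Xi2 : T2 -> set 'rV[R]_d) (Z2 : T2 -> 'rV[R]_d -> \bar R) :
  measure_is_complete P1 -> measure_is_complete P2 ->
  random_marked_closed_set Xi1 Z1 -> random_marked_closed_set Xi2 Z2 ->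
  (forall (n : nat) (B : 'I_n -> set 'rV[R]_d) (t : 'I_n -> \bar R)
          (I : {set 'I_n}),
     (forall i, compact (B i)) ->
     P1 (joint_event Xi1 Z1 B t I) = P2 (joint_event Xi2 Z2 B t I)) ->
  forall A : set (set ('rV[R]_d * \bar R)), fell_borel A ->
    distribution_rmcs P1 Xi1 Z1 A = distribution_rmcs P2 Xi2 Z2 A.
Proof.
move=> _ _ rmcs1 rmcs2 joint_eq A /fell_borel_hypo_measurable [A' mA' AA'].
have [_ _ P12] := sigma_preimage_agree (@avoid_boxes_setI R d)
  (avoid_boxes_preimage_agree rmcs1 rmcs2 joint_eq) mA'.
have hypo dT (T : measurableType dT) Xi Z : random_marked_closed_set Xi Z ->
    [set w : T | A (tau (Xi w) (Z w))] = (fun w => tau (Xi w) (Z w)) @^-1` A'.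
  move=> rmcs; have htau w : hypograph (tau (Xi w) (Z w)).
    by have [clX uX] := rmcs.1 w; exists (Xi w), (Z w).
  by apply/seteqP; split => w /(AA' _ (htau w)).
by rewrite /distribution_rmcs (hypo _ _ _ _ rmcs1) (hypo _ _ _ _ rmcs2).
Qed.
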